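(* For any complex numbers $a,b,\alpha,\beta$ with $\beta a-\alpha b\neq0$ and any natural number $n\ge1$, \[ \sum_{r=0}^{\lfloor n/2\rfloor}\Psi\left(\begin{array}{cc|c} a & b & n \\ \alpha & \beta & r \end{array}\right)(-1)^r=\Psi(a+\alpha,b+\beta,n),\qquad \sum_{r=0}^{\lfloor (n-1)/2\rfloor}\Phi\left(\begin{array}{cc|c} a & b & n \\ \alpha & \beta & r \end{array}\right)(-1)^r=\Phi(a+\alpha,b+\beta,n). \]
   Context: $\delta(m)=1$ for $m$ odd, $0$ for $m$ even; $\lfloor\cdot\rfloor$ is the floor. $\Psi(a,b,n)$, $\Phi(a,b,n)$ are defined by $\Psi(a,b,0)=2$, $\Psi(a,b,1)=1$, $\Psi(a,b,n+1)=(2a-b)^{\delta(n)}\Psi(a,b,n)-a\Psi(a,b,n-1)$ and $\Phi(a,b,0)=0$, $\Phi(a,b,1)=1$, $\Phi(a,b,n+1)=(2a-b)^{\delta(n+1)}\Phi(a,b,n)-a\Phi(a,b,n-1)$. For $n\ge1$ and numbers with $\beta a-\alpha b\ne0$, $\Psi\left(\begin{array}{cc|c} a & b & n \\ \alpha & \beta & r \end{array}\right)$ ($0\le r\le\lfloor n/2\rfloor$) and $\Phi\left(\begin{array}{cc|c} a & b & n \\ \alpha & \beta & r \end{array}\right)$ ($0\le r\le\lfloor (n-1)/2\rfloor$) are the unique numbers such that, identically in $x,y$, $(\beta a-\alpha b)^{\lfloor n/2\rfloor}\frac{x^n+y^n}{(x+y)^{\delta(n)}}=\sum_{r}\Psi\left(\begin{array}{cc|c}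 a & b & n \\ \alpha & \beta & r \end{array}\right)(\alpha x^2+\beta xy+\alpha y^2)^{\lfloor n/2\rfloor-r}(ax^2+bxy+ay^2)^r$ and $(\beta a-\alpha b)^{\lfloor (n-1)/2\rfloor}\frac{x^n-y^n}{(x-y)(x+y)^{\delta(n-1)}}=\sum_{r}\Phi\left(\begin{array}{cc|c} a & b & n \\ \alpha & \beta & r \end{array}\right)(\alpha x^2+\beta xy+\alpha y^2)^{\lfloor (n-1)/2\rfloor-r}(ax^2+bxy+ay^2)^r$. *)

From HB Require Import structures.
From mathcomp Require Import all_boot all_order all_algebra.
From mathcomp Require Import reals.
From mathcomp Require Import complex.
Set Implicit Arguments. Unset Strict Implicit. Unset Printing Implicit Defensive.
Import Order.TTheory GRing.Theory Num.Theory.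
Local Open Scope ring_scope.

Section Defs.
Variable F : comRingType.

Definition delta (m : nat) : nat := odd m.

Fixpoint Psi (a b : F) (n : nat) {struct n} : F :=
  match n with
  | 0 => 2
  | 1 => 1
  | (m.+1 as k).+1 => (2 * a - b) ^+ delta k * Psi a b k - a * Psi a b m
  end.

Fixpoint Phi (a b : F) (n : nat) {struct n} : F :=
  match n with
  | 0 => 0
  | 1 => 1
  | (m.+1 as k).+1 => (2 * a - b) ^+ delta k.+1 * Phi a b k - a * Phi a b m
  end.
End Defs.

Section Coefs.
Variable F : fieldType.

(* c : nat -> F is the family Psi(a b n | al be r), 0 <= r <= n/2, iff
   identically in x, y:
   (be a - al b)^(n/2) (x^n+y^n)/(x+y)^delta(n)
     = sum_r c r (al x^2 + be x y + al y^2)^(n/2 - r) (a x^2 + b x y + a y^2)^r *)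
Definition is_Psi_coefs (a b al be : F) (n : nat) (c : nat -> F) : Prop :=
  forall x y : F, (x + y) ^+ delta n != 0 ->
    (be * a - al * b) ^+ n./2 * ((x ^+ n + y ^+ n) / (x + y) ^+ delta n)
    = \sum_(0 <= r < n./2.+1)
        c r * (al * x ^+ 2 + be * x * y + al * y ^+ 2) ^+ (n./2 - r)
            * (a * x ^+ 2 + b * x * y + a * y ^+ 2) ^+ r.

(* same for Phi(a b n | al be r), 0 <= r <= (n-1)/2 *)
Definition is_Phi_coefs (a b al be : F) (n : nat) (c : nat -> F) : Prop :=
  forall x y : F, (x - y) * (x + y) ^+ delta n.-1 != 0 ->
    (be * a - al * b) ^+ (n.-1)./2
      * ((x ^+ n - y ^+ n) / ((x - y) * (x + y) ^+ delta n.-1))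
    = \sum_(0 <= r < (n.-1)./2.+1)
        c r * (al * x ^+ 2 + be * x * y + al * y ^+ 2) ^+ ((n.-1)./2 - r)
            * (a * x ^+ 2 + b * x * y + a * y ^+ 2) ^+ r.
End Coefs.

(* Put x = 1, y = t in the defining identities.  Since
   Psi t (-(1 + t^2)) n * (1 + t)^delta(n) = 1 + t^n, the case x = 1 of
   Psi (x y) (-(x^2 + y^2)) n * (x + y)^delta(n) = x^n + y^n, and similarly for Phi,
   the denominators cancel and we get polynomial identities in t; they hold for
   t = 2, 3, ..., hence for every t.  Over an algebraically closed field we can write
   (a + al, b + be) = mu (t, -(1 + t^2)).  For this t the two quadratic forms at (1, t)
   are opposite, so the right-hand side becomes (symq al be 1 t)^k times the
   alternating coefficient sum, with k = n/2 (resp. (n-1)/2).  Multiplying by mu^k,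
   homogeneity of Psi turns the left-hand side into (be a - al b)^k Psi (a+al) (b+be) n,
   and the right-hand side into (be a - al b)^k times the alternating sum, because
   mu * symq al be 1 t = be a - al b. *)

From HB Require Import structures.
From mathcomp Require Import all_boot all_order all_algebra.
From mathcomp Require Import reals complex.
From mathcomp Require Import ring zify.
Set Implicit Arguments.
Unset Strict Implicit.
Unset Printing Implicit Defensive.

Import Order.TTheory GRing.Theory Num.Theory.
Local Open Scope ring_scope.

Lemma nat_ind2 (P : nat -> Prop) :
  P 0%N -> P 1%N -> (forall k, P k -> P k.+1 -> P k.+2) -> forall n, P n.
Proof.
move=> P0 P1 PSS n; suff [] : P n /\ P n.+1 by [].
by elim: n => [|n [Pn PSn]]; split => //; apply: PSS.
Qed.

Section Recurrences.
Variable R : comNzRingType.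
Implicit Types a b l t : R.

Lemma PsiSS a b k :
  Psi a b k.+2 = (2 * a - b) ^+ delta k.+1 * Psi a b k.+1 - a * Psi a b k.
Proof. by []. Qed.

Lemma PhiSS a b k :
  Phi a b k.+2 = (2 * a - b) ^+ delta k.+2 * Phi a b k.+1 - a * Phi a b k.
Proof. by []. Qed.

Lemma Psi_scale l a b n : Psi (l * a) (l * b) n = l ^+ n./2 * Psi a b n.
Proof.
elim/nat_ind2: n => [||k IHk IHk1]; rewrite ?expr0 ?mul1r //.
rewrite !PsiSS IHk IHk1.
have -> : 2 * (l * a) - l * b = l * (2 * a - b) by ring.
have e1 : l ^+ k.+2./2 = l ^+ delta k.+1 * l ^+ k.+1./2.
  by rewrite -exprD /delta -uphalf_half.
have e2 : l ^+ k.+2./2 = l * l ^+ k./2 by rewrite -exprS.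
rewrite exprMn [in X in _ = X]mulrBr {1}e1 e2; ring.
Qed.

Lemma Phi_scale l a b n : Phi (l * a) (l * b) n = l ^+ n.-1./2 * Phi a b n.
Proof.
case: n => [|n]; first by rewrite /= mulr0.
elim/nat_ind2: n => [||k IHk IHk1].
- by rewrite expr0 mul1r.
- by rewrite /= !expr0 !mul1r !mulr0.
rewrite PhiSS [in X in _ = X]PhiSS IHk IHk1 !succnK.
have -> : 2 * (l * a) - l * b = l * (2 * a - b) by ring.
have e1 : l ^+ k.+2./2 = l ^+ delta k.+3 * l ^+ k.+1./2.
  by rewrite -exprD /delta; congr (_ ^+ _); lia.
have e2 : l ^+ k.+2./2 = l * l ^+ k./2 by rewrite -exprS.
rewrite exprMn [in X in _ = X]mulrBr {1}e1 e2; ring.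
Qed.

Lemma rmorph_Psi (S : comNzRingType) (f : {rmorphism R -> S}) a b n :
  f (Psi a b n) = Psi (f a) (f b) n.
Proof.
elim/nat_ind2: n => [||k IHk IHk1]; rewrite ?rmorph_nat ?rmorph1 //.
by rewrite !PsiSS !(rmorphB, rmorphM, rmorphXn, rmorph_nat) IHk IHk1.
Qed.

Lemma rmorph_Phi (S : comNzRingType) (f : {rmorphism R -> S}) a b n :
  f (Phi a b n) = Phi (f a) (f b) n.
Proof.
elim/nat_ind2: n => [||k IHk IHk1]; rewrite ?rmorph0 ?rmorph1 //.
by rewrite !PhiSS !(rmorphB, rmorphM, rmorphXn, rmorph_nat) IHk IHk1.
Qed.

Lemma Psi_lucas t n : Psi t (- (1 + t ^+ 2)) n * (1 + t) ^+ delta n = 1 + t ^+ n.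
Proof.
elim/nat_ind2: n => [||k IHk IHk1]; first by rewrite mulr1 expr0.
  by rewrite expr1 mul1r.
rewrite PsiSS.
have -> : 2 * t - - (1 + t ^+ 2) = (1 + t) ^+ 2 by ring.
move: IHk IHk1; rewrite /delta !oddS !negbK.
case: (odd k); rewrite ?expr0 ?expr1 ?mulr1 ?mul1r => IHk IHk1.
  by rewrite mulrBl -mulrA IHk IHk1 !exprS; ring.
by rewrite IHk expr2 -mulrA [_ * Psi _ _ k.+1]mulrC IHk1 !exprS; ring.
Qed.

Lemma Phi_lucas t n :
  Phi t (- (1 + t ^+ 2)) n * ((1 - t) * (1 + t) ^+ delta n.-1) = 1 - t ^+ n.
Proof.
case: n => [|n]; first by rewrite mul0r expr0 subrr.
elim/nat_ind2: n => [||k IHk IHk1]; first by rewrite expr0 !mul1r mulr1 expr1.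
  by rewrite /= expr0 !mul1r mulr0 subr0 expr1; ring.
rewrite PhiSS.
have -> : 2 * t - - (1 + t ^+ 2) = (1 + t) ^+ 2 by ring.
move: IHk IHk1; rewrite !succnK /delta !oddS !negbK.
move: (Phi t _ k.+1) (Phi t _ k.+2) => x y.
case: (odd k); rewrite ?expr0 ?expr1 ?mulr1 ?mul1r => IHk IHk1.
  have -> : (y - t * x) * ((1 - t) * (1 + t))
    = y * (1 - t) * (1 + t) - t * (x * ((1 - t) * (1 + t))) by ring.
  by rewrite IHk IHk1 !exprS; ring.
have -> : ((1 + t) ^+ 2 * y - t * x) * (1 - t)
  = (1 + t) * (y * ((1 - t) * (1 + t))) - t * (x * (1 - t)) by ring.
by rewrite IHk IHk1 !exprS; ring.
Qed.
End Recurrences.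

Definition binform (R : comNzRingType) (c : nat -> R) (m : nat) (u v : R) : R :=
  \sum_(0 <= r < m.+1) c r * u ^+ (m - r) * v ^+ r.

Definition symq (R : comNzRingType) (a b x y : R) : R :=
  a * x ^+ 2 + b * x * y + a * y ^+ 2.

Lemma binform_oppr (R : comNzRingType) (c : nat -> R) m u :
  binform c m u (- u) = u ^+ m * \sum_(0 <= r < m.+1) c r * (-1) ^+ r.
Proof.
rewrite /binform big_distrr; apply: eq_big_nat => r /andP [_ lt_r_m].
rewrite /= -[- u]mulN1r exprMn -{2}(subnK (ltnSE lt_r_m)) exprD; ring.
Qed.

Lemma horner_binform (R : comNzRingType) (c : nat -> R) m (u v : {poly R}) s :
  (binform (fun r => (c r)%:P) m u v).[s] = binform c m u.[s] v.[s].
Proof. by rewrite /binform horner_sum; apply: eq_bigr => r _; rewrite !hornerE. Qed.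

Lemma eq_poly_natr (F : numDomainType) (p q : {poly F}) m :
  (forall k, (m <= k)%N -> p.[k%:R] = q.[k%:R]) -> p = q.
Proof.
move=> pq; apply/eqP; rewrite -subr_eq0; apply/eqP.
apply: (@roots_geq_poly_eq0 _ _ [seq (m + i)%:R | i <- iota 0 (size (p - q))]).
- apply/allP => _ /mapP [i _ ->]; apply/rootP.
  by rewrite hornerD hornerN pq ?leq_addr // subrr.
- by rewrite map_inj_uniq ?iota_uniq // => i j /eqP; rewrite eqr_nat eqn_add2l => /eqP.
- by rewrite size_map size_iota.
Qed.

Section CoefficientIdentities.
Variables (F : numFieldType) (a b al be : F).

Lemma extend_identity_from_natr (G : F -> F -> F) (Gp : {poly F} -> {poly F} -> {poly F})
    k (c : nat -> F) :
  (forall p q s, (Gp p q).[s] = G p.[s] q.[s]) ->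
  (forall j, (2 <= j)%N -> (be * a - al * b) ^+ k * G j%:R (- (1 + j%:R ^+ 2))
     = binform c k (symq al be 1 j%:R) (symq a b 1 j%:R)) ->
  forall t, (be * a - al * b) ^+ k * G t (- (1 + t ^+ 2))
     = binform c k (symq al be 1 t) (symq a b 1 t).
Proof.
move=> hornerG G_natr t.
pose lhs := ((be * a - al * b) ^+ k)%:P * Gp 'X (- (1 + 'X ^+ 2)).
pose rhs := binform (fun r => (c r)%:P) k (symq al%:P be%:P 1 'X) (symq a%:P b%:P 1 'X).
have lhsE s : lhs.[s] = (be * a - al * b) ^+ k * G s (- (1 + s ^+ 2)).
  by rewrite hornerCM hornerG !hornerE.
have rhsE s : rhs.[s] = binform c k (symq al be 1 s) (symq a b 1 s).
  by rewrite horner_binform /symq !hornerE.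
rewrite -lhsE -rhsE; congr horner; apply: (@eq_poly_natr _ _ _ 2) => j j_ge2.
by rewrite lhsE rhsE G_natr.
Qed.

Variables (n : nat) (c : nat -> F).

Lemma is_Psi_coefs_lucas : is_Psi_coefs a b al be n c -> forall t,
  (be * a - al * b) ^+ n./2 * Psi t (- (1 + t ^+ 2)) n
  = binform c n./2 (symq al be 1 t) (symq a b 1 t).
Proof.
move=> coefs.
apply: (@extend_identity_from_natr (fun x y => Psi x y n) (fun p q => Psi p q n))
  => [p q s|j _].
  by rewrite -horner_evalE rmorph_Psi.
have nz : (1 + j%:R) ^+ delta n != 0 :> F by rewrite expf_neq0 // nat1r pnatr_eq0.
by move: (coefs 1 j%:R nz); rewrite expr1n -(Psi_lucas j%:R n) mulfK.
Qed.

Lemma is_Phi_coefs_lucas : is_Phi_coefs a b al be n c -> forall t,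
  (be * a - al * b) ^+ n.-1./2 * Phi t (- (1 + t ^+ 2)) n
  = binform c n.-1./2 (symq al be 1 t) (symq a b 1 t).
Proof.
move=> coefs.
apply: (@extend_identity_from_natr (fun x y => Phi x y n) (fun p q => Phi p q n))
  => [p q s|j j_ge2].
  by rewrite -horner_evalE rmorph_Phi.
have nz : (1 - j%:R) * (1 + j%:R) ^+ delta n.-1 != 0 :> F.
  rewrite mulf_neq0 ?expf_neq0 ?nat1r ?pnatr_eq0 // subr_eq0 eq_sym pnatr_eq1.
  by apply: contraTneq j_ge2 => ->.
by move: (coefs 1 j%:R nz); rewrite expr1n -(Phi_lucas j%:R n) mulfK.
Qed.
End CoefficientIdentities.

Lemma lucas_param (F : closedFieldType) (A B : F) :
  exists t mu, A = mu * t /\ B = mu * - (1 + t ^+ 2).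
Proof.
have [->|A0] := eqVneq A 0.
  by exists 0, (- B); rewrite mulr0 expr0n addr0 mulrN1 opprK.
have [t t2E] := @solve_monicpoly F 2 (fun i => if i == 0%N then -1 else - (B / A)) isT.
rewrite big_ord_recr big_ord1 /= expr0 expr1 mulr1 in t2E.
have t0 : t != 0.
  by apply: contra_eq_neq t2E => ->; rewrite expr0n mulr0 addr0 eq_sym oppr_eq0 oner_eq0.
exists t, (A / t); split; first by rewrite divfK.
by rewrite t2E; field; rewrite A0 t0.
Qed.

Lemma alternating_coef_sum (F : closedFieldType) (G : F -> F -> F) k
    (c : nat -> F) (a b al be : F) :
  be * a - al * b != 0 ->
  (forall mu x y, G (mu * x) (mu * y) = mu ^+ k * G x y) ->
  (forall t, (be * a - al * b) ^+ k * G t (- (1 + t ^+ 2))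
               = binform c k (symq al be 1 t) (symq a b 1 t)) ->
  \sum_(0 <= r < k.+1) c r * (-1) ^+ r = G (a + al) (b + be).
Proof.
move=> D0 G_scale G_lucas.
have [t [mu [AE BE]]] := lucas_param (a + al) (b + be).
have symqN : symq a b 1 t = - symq al be 1 t.
  apply/eqP; rewrite -addr_eq0; apply/eqP.
  transitivity ((a + al) * (1 + t ^+ 2) + (b + be) * t); first by rewrite /symq; ring.
  by rewrite AE BE; ring.
have muD : mu * symq al be 1 t = be * a - al * b.
  transitivity (be * (a + al) - al * (b + be)); last by ring.
  by rewrite AE BE /symq; ring.
apply: (mulfI (expf_neq0 k D0)).
by rewrite AE BE G_scale mulrCA G_lucas symqN binform_oppr mulrA -exprMn muD.
Qed.

Local Open Scope complex_scope.

Theorem theorem10p4 (R : realType) (a b al be : R[i]) (n : nat)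
    (cPsi cPhi : nat -> R[i]) :
  be * a - al * b != 0 -> (1 <= n)%N ->
  is_Psi_coefs a b al be n cPsi ->
  is_Phi_coefs a b al be n cPhi ->
  \sum_(0 <= r < n./2.+1) cPsi r * (-1) ^+ r = Psi (a + al) (b + be) n /\
  \sum_(0 <= r < (n.-1)./2.+1) cPhi r * (-1) ^+ r = Phi (a + al) (b + be) n.
Proof.
move=> D0 _ psi_coefs phi_coefs; split.
- exact: alternating_coef_sum D0 (fun mu x y => Psi_scale mu x y n)
                               (is_Psi_coefs_lucas psi_coefs).
- exact: alternating_coef_sum D0 (fun mu x y => Phi_scale mu x y n)
                               (is_Phi_coefs_lucas phi_coefs).
Qed.
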